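(* Fix a task $(\mathcal{S},\mathcal{A},\_,d_0,\mathcal{R},\gamma)$ and let $\Pi_{\mathrm{NS}}$ be the set of all non-stationary policies. Let $\mathcal{T},\mathcal{T}'$ be transition models such that $J_{\mathcal{T}}$ and $J_{\mathcal{T}'}$ are both non-trivial on $\Pi_{\mathrm{NS}}$ and are not equivalent on $\Pi_{\mathrm{NS}}$. Then $(\mathcal{T},\mathcal{T}')$ is exploitable relative to $\Pi_{\mathrm{NS}}$ and this task.
   Context: A Markov decision process (MDP) is $(\mathcal{S},\mathcal{A},\mathcal{T},d_0,\mathcal{R},\gamma)$ with finite state space $\mathcal{S}$, finite action space $\mathcal{A}$ with $|\mathcal{A}|>1$, transition model $\mathcal{T}:\mathcal{S}\times\mathcal{A}\to\Delta(\mathcal{S})$, initial distribution $d_0\in\Delta(\mathcal{S})$, reward $\mathcal{R}:\mathcal{S}\times\mathcal{A}\to\mathbb{R}$, discount $\gamma\in[0,1)$; all states are assumed reachable. A task is an MDP without its transition model, $(\mathcal{S},\mathcal{A},\_,d_0,\mathcal{R},\gamma)$. A non-stationary policy is a sequence $\pi=(\pi_0,\pi_1,\dots)$ of maps $\pi_t:\mathcal{S}\to\Delta(\mathcal{A})$ (action at time $t$ drawn from $\pi_t(\cdot\mid s_t)$). For a transition model $\mathcal{T}$, $J_{\mathcal{T}}(\pi)=\mathbb{E}\big[\sum_{t\ge0}\gamma^t\mathcal{R}(s_t,a_t)\big]$ where $s_0\sim d_0$, $a_t\sim\pi_t(\cdot\mid s_t)$, $s_{t+1}\sim\mathcal{T}(\cdot\mid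 s_t,a_t)$. A value function $J$ is trivial on a policy set $\Pi$ if it is constant on $\Pi$. Two value functions $J_1,J_2$ are equivalent on $\Pi$ if for all $\pi,\pi'\in\Pi$, $J_1(\pi)\ge J_1(\pi')\iff J_2(\pi)\ge J_2(\pi')$. Transition models $\mathcal{T},\mathcal{T}'$ are exploitable relative to $\Pi$ and a task if there exist $\pi,\pi'\in\Pi$ with $J_{\mathcal{T}}(\pi)>J_{\mathcal{T}}(\pi')$ and $J_{\mathcal{T}'}(\pi')>J_{\mathcal{T}'}(\pi)$; otherwise unexploitable. *)

From HB Require Import structures.
From mathcomp Require Import all_boot all_order all_algebra.
From mathcomp Require Import all_classical all_reals all_analysis.
Set Implicit Arguments. Unset Strict Implicit. Unset Printing Implicit Defensive.
Import Order.TTheory GRing.Theory Num.Theory.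
Import numFieldNormedType.Exports.
Local Open Scope ring_scope.

Section MDP.
Variables (R : realType) (S A : finType).

Definition is_dist (T : finType) (p : T -> R) : Prop :=
  (forall x, 0 <= p x) /\ \sum_(x : T) p x = 1.

(* transition model T(s,a) in Delta(S): Tm s a s' = T(s' | s, a) *)
Definition is_transition (Tm : S -> A -> S -> R) : Prop :=
  forall s a, is_dist (Tm s a).

(* non-stationary policy: pi t s a = pi_t(a | s) *)
Definition is_policy (pi : nat -> S -> A -> R) : Prop :=
  forall t s, is_dist (pi t s).

Fixpoint state_dist (d0 : S -> R) (Tm : S -> A -> S -> R)
    (pi : nat -> S -> A -> R) (t : nat) : S -> R :=
  match t with
  | 0 => d0
  | t'.+1 => fun s' => \sum_(s : S) \sum_(a : A)
        state_dist d0 Tm pi t' s * pi t' s a * Tm s a s'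
  end.

(* J_T(pi) = E[sum_t gamma^t R(s_t,a_t)] = sum_t gamma^t E[R(s_t,a_t)] *)
Definition value (d0 : S -> R) (Rw : S -> A -> R) (gamma : R)
    (Tm : S -> A -> S -> R) (pi : nat -> S -> A -> R) : R :=
  limn (@series R (fun t : nat => gamma ^+ t *
     \sum_(s : S) \sum_(a : A) state_dist d0 Tm pi t s * pi t s a * Rw s a)).

Definition all_reachable (d0 : S -> R) (Tm : S -> A -> S -> R) : Prop :=
  forall s, exists pi t, is_policy pi /\ 0 < state_dist d0 Tm pi t s.

Definition trivial_on_NS (J : (nat -> S -> A -> R) -> R) : Prop :=
  forall pi pi', is_policy pi -> is_policy pi' -> J pi = J pi'.

Definition equivalent_on_NS (J1 J2 : (nat -> S -> A -> R) -> R) : Prop :=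
  forall pi pi', is_policy pi -> is_policy pi' ->
    ((J1 pi' <= J1 pi) <-> (J2 pi' <= J2 pi)).

Definition exploitable_on_NS (J1 J2 : (nat -> S -> A -> R) -> R) : Prop :=
  exists pi pi', is_policy pi /\ is_policy pi' /\
    J1 pi' < J1 pi /\ J2 pi < J2 pi'.

End MDP.

From HB Require Import structures.
From mathcomp Require Import all_boot all_order all_algebra.
From mathcomp Require Import all_classical all_reals all_analysis.
From mathcomp Require Import lra.
Set Implicit Arguments. Unset Strict Implicit. Unset Printing Implicit Defensive.
Import Order.TTheory GRing.Theory Num.Theory.
Import numFieldNormedType.Exports.
Local Open Scope ring_scope.
Local Open Scope classical_set_scope.

(* Assume (J, J') is not exploitable: J' weakly respects every strict
   preference of J, and conversely.  If J and J' were not equivalent, there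
   would be policies p, q with J p = J q but J' p < J' q.  Take r with
   J r <> J p and blend r into p (or into q) during the first k steps with
   weight l in [0, 1].  Only finitely many steps depend on l, so both values
   are polynomials in l, and for k large the endpoint l = 1 has J on the same
   side of J p as r.  Hence J' sweeps the whole interval (J' p, J' q) along
   the path, and wherever it is strictly inside, non-exploitability forces
   J = J p.  The polynomial J - J p then has infinitely many roots, so it
   vanishes, contradicting its value at l = 1. *)

Lemma dist_le1 (R : realType) (T : finType) (p : T -> R) x : is_dist p -> p x <= 1.
Proof. by move=> [p0 <-]; rewrite (bigD1 x) //= lerDl sumr_ge0. Qed.

Section Dynamics.
Variables (R : realType) (S A : finType) (Tm : S -> A -> S -> R).

Definition delta (x : S) : S -> R := fun y => (y == x)%:R.

Lemma delta_dist x : is_dist (delta x).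
Proof.
split=> [y|]; first by rewrite /delta ler0n.
by rewrite (bigD1 x) //= /delta eqxx big1 ?addr0 // => y /negbTE ->.
Qed.

Lemma state_dist_shift d pi k n : state_dist d Tm pi (n + k) =
  state_dist (state_dist d Tm pi k) Tm (fun t => pi (t + k)%N) n.
Proof. by elim: n => [|n IH] //; rewrite addSn /= IH. Qed.

Lemma state_dist_linear d pi t s' :
  state_dist d Tm pi t s' = \sum_x d x * state_dist (delta x) Tm pi t s'.
Proof.
elim: t s' => [|t IH] s' /=.
  rewrite (bigD1 s') //= /delta eqxx mulr1 big1 ?addr0 // => x.
  by rewrite eq_sym => /negbTE ->; rewrite mulr0.
under eq_bigr do under eq_bigr do rewrite IH !mulr_suml.
under [RHS]eq_bigr do rewrite mulr_sumr.
under [RHS]eq_bigr do under eq_bigr do rewrite mulr_sumr.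
rewrite [RHS]exchange_big; apply: eq_bigr => s _.
rewrite [RHS]exchange_big; apply: eq_bigr => a _.
by apply: eq_bigr => x _; rewrite !mulrA.
Qed.

Lemma state_dist_agree d pi pi' k :
  (forall t, (t < k)%N -> pi t = pi' t) ->
  forall t, (t <= k)%N -> state_dist d Tm pi t = state_dist d Tm pi' t.
Proof.
move=> agree; elim=> [|t IH] // ltk /=; rewrite IH ?(ltnW ltk) ?agree //.
Qed.

Hypothesis hT : is_transition Tm.

Lemma state_dist_dist d pi : is_dist d -> is_policy pi ->
  forall t, is_dist (state_dist d Tm pi t).
Proof.
move=> hd hpi; elim=> [|t [sd0 sd1]] //=; split.
  move=> s'; apply: sumr_ge0 => s _; apply: sumr_ge0 => a _.
  by rewrite !mulr_ge0 //; [case: (hpi t s) | case: (hT s a)].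
rewrite exchange_big /= -sd1; apply: eq_bigr => s _.
rewrite exchange_big /= -[RHS]mulr1 -(proj2 (hpi t s)) mulr_sumr.
apply: eq_bigr => a _.
by rewrite -mulr_sumr (proj2 (hT s a)) mulr1.
Qed.

End Dynamics.

Arguments delta {R S} x _.
Arguments delta_dist {R S} x.

Section PolynomialFunctions.
Variable R : comNzRingType.

Definition polyfun (f : R -> R) := exists Q : {poly R}, forall l, f l = Q.[l].

Lemma polyfun_cst c : polyfun (fun=> c).
Proof. by exists c%:P => l; rewrite hornerC. Qed.

Lemma polyfun_id : polyfun id.
Proof. by exists 'X => l; rewrite hornerX. Qed.

Lemma polyfun_add f g : polyfun f -> polyfun g -> polyfun (fun l => f l + g l).
Proof. by move=> [P hP] [Q hQ]; exists (P + Q) => l; rewrite hornerD hP hQ. Qed.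

Lemma polyfun_sub f g : polyfun f -> polyfun g -> polyfun (fun l => f l - g l).
Proof. by move=> [P hP] [Q hQ]; exists (P - Q) => l; rewrite hornerD hornerN hP hQ. Qed.

Lemma polyfun_mul f g : polyfun f -> polyfun g -> polyfun (fun l => f l * g l).
Proof. by move=> [P hP] [Q hQ]; exists (P * Q) => l; rewrite hornerM hP hQ. Qed.

Lemma polyfun_sum (I : finType) (f : I -> R -> R) :
  (forall i, polyfun (f i)) -> polyfun (fun l => \sum_i f i l).
Proof.
move=> /choice[Q hQ]; exists (\sum_i Q i) => l.
by rewrite horner_sum; apply: eq_bigr => i _.
Qed.

End PolynomialFunctions.

Section Mixing.
Variables (R : realType) (S A : finType).
Implicit Types b r : nat -> S -> A -> R.

Definition mix b r k (l : R) : nat -> S -> A -> R :=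
  fun t s a => if (t < k)%N then (1 - l) * b t s a + l * r t s a else b t s a.

Lemma mix_policy b r k l : is_policy b -> is_policy r -> 0 <= l <= 1 ->
  is_policy (mix b r k l).
Proof.
move=> hb hr /andP[l0 l1] t s; rewrite /mix; case: (t < k)%N; last exact: hb.
have [b0 b1] := hb t s; have [r0 r1] := hr t s; split.
  by move=> a; rewrite addr_ge0 ?mulr_ge0 ?subr_ge0.
by rewrite big_split /= -!mulr_sumr b1 r1 !mulr1 subrK.
Qed.

Lemma mix0 b r k : mix b r k 0 = b.
Proof.
apply/funext => t; apply/funext => s; apply/funext => a.
by rewrite /mix; case: (t < k)%N; rewrite // subr0 mul1r mul0r addr0.
Qed.

Lemma mix1 b r k t : (t < k)%N -> mix b r k 1 t = r t.
Proof.
move=> ltk; apply/funext => s; apply/funext => a.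
by rewrite /mix ltk subrr mul0r add0r mul1r.
Qed.

Lemma mix_shift b r k l :
  (fun t => mix b r k l (t + k)%N) = (fun t => b (t + k)%N).
Proof. by apply/funext => t; rewrite /mix ltnNge leq_addl. Qed.

Lemma polyfun_mix b r k t s a : polyfun (fun l => mix b r k l t s a).
Proof.
rewrite /mix; case: (t < k)%N; last exact: polyfun_cst.
apply: polyfun_add; apply: polyfun_mul; try exact: polyfun_cst; last exact: polyfun_id.
by apply: polyfun_sub; [exact: polyfun_cst | exact: polyfun_id].
Qed.

Lemma polyfun_state_dist_mix d Tm b r k t s :
  polyfun (fun l => state_dist d Tm (mix b r k l) t s).
Proof.
elim: t s => [|t IH] s /=; first exact: polyfun_cst.
apply: polyfun_sum => x; apply: polyfun_sum => a.
apply: polyfun_mul; last exact: polyfun_cst.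
by apply: polyfun_mul; [exact: IH | exact: polyfun_mix].
Qed.

End Mixing.

Lemma poly_level_roots (R : realType) (P H : {poly R}) (a b : R) : a < b ->
  (forall l, 0 <= l <= 1 -> a < H.[l] < b -> root P l) ->
  (H.[0] <= a /\ b <= H.[1]) \/ (H.[1] <= a /\ b <= H.[0]) -> P = 0.
Proof.
move=> ab mid_root ends.
have level v : exists l, a < v < b -> 0 <= l <= 1 /\ H.[l] = v.
  case: (boolP (a < v < b)) => [/andP[av vb]|]; last by exists 0.
  suff [l l01 /rootP] : exists2 l, 0 <= l <= 1 & root (H - v%:P) l.
    by rewrite !hornerE => /eqP; rewrite subr_eq0 => /eqP Hl; exists l.
  case: ends => -[h0 h1].
    by apply: (poly_ivt ler01); rewrite !hornerE subr_le0 subr_ge0;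
      apply/andP; split; lra.
  have [l l01 rl] : exists2 l, 0 <= l <= 1 & root (v%:P - H) l.
    by apply: (poly_ivt ler01); rewrite !hornerE subr_le0 subr_ge0;
      apply/andP; split; lra.
  by exists l; rewrite // -rootN opprB.
have /choice[pick hpick] := level.
pose v (i : nat) := a + (b - a) / i.+2%:R.
have v_in i : a < v i < b.
  have i2 : 1 < i.+2%:R :> R by rewrite ltr1n.
  rewrite /v ltrDl divr_gt0 ?subr_gt0 ?ltr0n //= -ltrBrDl ltr_pdivrMr ?ltr0n //.
  by rewrite ltr_pMr ?subr_gt0.
apply: (@roots_geq_poly_eq0 _ _ [seq pick (v i) | i <- iota 0 (size P)]).
- apply/allP => _ /mapP[i _ ->]; have [l01 Hl] := hpick _ (v_in i).
  by apply: mid_root; rewrite // Hl.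
- rewrite map_inj_uniq ?iota_uniq // => i j eq_pick.
  have : v i = v j.
    by rewrite -(proj2 (hpick _ (v_in i))) eq_pick (proj2 (hpick _ (v_in j))).
  move=> /addrI /mulfI; rewrite subr_eq0 gt_eqF // => /(_ isT) /invr_inj /eqP.
  by rewrite eqr_nat => /eqP [].
- by rewrite size_map size_iota.
Qed.

Section Value.
Variables (R : realType) (S A : finType) (Rw : S -> A -> R) (gamma : R)
  (Tm : S -> A -> S -> R).
Hypotheses (gamma_ge0 : 0 <= gamma) (gamma_lt1 : gamma < 1)
  (hT : is_transition Tm).

Let gamma_norm_lt1 : `|gamma| < 1. Proof. by rewrite ger0_norm. Qed.

Definition disc_reward d pi t : R := gamma ^+ t *
  \sum_s \sum_a state_dist d Tm pi t s * pi t s a * Rw s a.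

Definition reward_mass : R := \sum_s \sum_a `|Rw s a|.

Definition value_bound : R := reward_mass / (1 - gamma).

Lemma reward_mass_ge0 : 0 <= reward_mass.
Proof. by apply: sumr_ge0 => s _; apply: sumr_ge0. Qed.

Lemma value_bound_ge0 : 0 <= value_bound.
Proof. by rewrite divr_ge0 ?reward_mass_ge0 // subr_ge0 ltW. Qed.

Lemma disc_reward_bound d pi t : is_dist d -> is_policy pi ->
  `|disc_reward d pi t| <= gamma ^+ t * reward_mass.
Proof.
move=> hd hpi; rewrite /disc_reward normrM ger0_norm ?exprn_ge0 //.
apply: ler_wpM2l; first exact: exprn_ge0.
apply: (le_trans (ler_norm_sum _ _ _)); apply: ler_sum => s _.
apply: (le_trans (ler_norm_sum _ _ _)); apply: ler_sum => a _.
have hsd := state_dist_dist hT hd hpi t.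
have [sd0 _] := hsd; have [pi0 _] := hpi t s.
rewrite !normrM (ger0_norm (sd0 s)) (ger0_norm (pi0 a)) -[leRHS]mul1r.
by rewrite ler_wpM2r // mulr_ile1 ?(dist_le1 _ hsd) ?(dist_le1 _ (hpi t s)).
Qed.

Lemma value_cvg d pi : is_dist d -> is_policy pi ->
  series (disc_reward d pi) @ \oo --> value d Rw gamma Tm pi /\
  `|value d Rw gamma Tm pi| <= value_bound.
Proof.
move=> hd hpi.
have geo := @cvg_geometric_series R reward_mass gamma gamma_norm_lt1.
have dominated n : `|disc_reward d pi n| <= geometric reward_mass gamma n.
  by rewrite /= mulrC disc_reward_bound.
have abs_cvg : cvgn [normed series (disc_reward d pi)].
  apply: (@series_le_cvg _ _ (geometric reward_mass gamma)) => [n|n|n|] /=.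
  - exact: normr_ge0.
  - by rewrite mulr_ge0 ?exprn_ge0 ?reward_mass_ge0.
  - exact: dominated.
  - by apply/cvg_ex; exists value_bound.
split; first exact: normed_cvg.
apply: (le_trans (lim_series_norm abs_cvg)).
rewrite /value_bound -(cvg_lim _ geo) //.
by apply: lim_series_le => //; apply/cvg_ex; exists value_bound.
Qed.

Lemma value_linear d pi : is_policy pi ->
  value d Rw gamma Tm pi = \sum_x d x * value (delta x) Rw gamma Tm pi.
Proof.
move=> hpi.
have reward_linear t :
    disc_reward d pi t = \sum_x d x * disc_reward (delta x) pi t.
  rewrite /disc_reward; under [RHS]eq_bigr do rewrite mulrCA.
  rewrite -mulr_sumr; congr (_ * _).
  under eq_bigr do under eq_bigr do rewrite state_dist_linear !mulr_suml.
  under [RHS]eq_bigr do rewrite mulr_sumr.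
  under [RHS]eq_bigr do under eq_bigr do rewrite mulr_sumr.
  rewrite [RHS]exchange_big; apply: eq_bigr => s _.
  rewrite [RHS]exchange_big; apply: eq_bigr => a _.
  by apply: eq_bigr => x _; rewrite !mulrA.
have series_linear n :
    series (disc_reward d pi) n = \sum_x d x * series (disc_reward (delta x) pi) n.
  rewrite /series /= (eq_bigr _ (fun t _ => reward_linear t)) exchange_big /=.
  by apply: eq_bigr => x _; rewrite mulr_sumr.
have -> : value d Rw gamma Tm pi = limn (series (disc_reward d pi)) by [].
rewrite (funext series_linear); apply: cvg_lim => //.
apply: (cvg_big add_continuous) => x _; apply: cvgMl_tmp.
exact: (proj1 (value_cvg (delta_dist x) hpi)).
Qed.

Lemma value_split d pi k : is_dist d -> is_policy pi ->
  value d Rw gamma Tm pi = \sum_(t < k) disc_reward d pi t +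
    gamma ^+ k * value (state_dist d Tm pi k) Rw gamma Tm (fun t => pi (t + k)%N).
Proof.
move=> hd hpi.
set d' := state_dist d Tm pi k; set pi' := fun t => pi (t + k)%N.
have hpi' : is_policy pi' by move=> t; exact: hpi.
have reward_shift t : disc_reward d pi (t + k)%N = gamma ^+ k * disc_reward d' pi' t.
  by rewrite /disc_reward state_dist_shift exprD [gamma ^+ t * _]mulrC -mulrA.
have series_shift n : series (disc_reward d pi) (n + k)%N =
    \sum_(t < k) disc_reward d pi t + gamma ^+ k * series (disc_reward d' pi') n.
  elim: n => [|n IH]; first by rewrite add0n !seriesEord /= big_ord0 mulr0 addr0.
  by rewrite addSn !seriesSr IH reward_shift mulrDr addrA.
have -> : value d Rw gamma Tm pi = limn (series (disc_reward d pi)) by [].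
apply: cvg_lim => //; rewrite -(cvg_shiftn k) /=.
rewrite (funext series_shift); apply: cvgD; first exact: cvg_cst.
apply: cvgMl_tmp; exact: (proj1 (value_cvg (state_dist_dist hT hd hpi k) hpi')).
Qed.

Lemma disc_reward_agree d pi pi' k : (forall t, (t < k)%N -> pi t = pi' t) ->
  forall t, (t < k)%N -> disc_reward d pi t = disc_reward d pi' t.
Proof.
move=> agree t ltk.
by rewrite /disc_reward (state_dist_agree _ _ agree (ltnW ltk)) agree.
Qed.

Lemma value_agree_bound d pi pi' k : is_dist d -> is_policy pi -> is_policy pi' ->
  (forall t, (t < k)%N -> pi t = pi' t) ->
  `|value d Rw gamma Tm pi - value d Rw gamma Tm pi'| <=
    gamma ^+ k * (value_bound + value_bound).
Proof.
move=> hd hpi hpi' agree.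
rewrite (value_split k hd hpi) (value_split k hd hpi').
rewrite (state_dist_agree _ _ agree (leqnn k)).
rewrite (eq_bigr _ (fun t _ => disc_reward_agree d agree (ltn_ord t))).
rewrite opprD addrACA subrr add0r -mulrBr normrM ger0_norm ?exprn_ge0 //.
rewrite ler_wpM2l ?exprn_ge0 //.
have hd' := state_dist_dist hT hd hpi' k.
apply: (le_trans (ler_normB _ _)); apply: lerD.
  by apply: (proj2 (value_cvg hd' _)) => t; exact: hpi.
by apply: (proj2 (value_cvg hd' _)) => t; exact: hpi'.
Qed.

Lemma value_mix_poly d b r k : is_dist d -> is_policy b -> is_policy r ->
  exists Q : {poly R}, forall l, 0 <= l <= 1 ->
    value d Rw gamma Tm (mix b r k l) = Q.[l].
Proof.
move=> hd hb hr.
pose tail x := value (delta x) Rw gamma Tm (fun t => b (t + k)%N).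
have [Q hQ] : polyfun (fun l => \sum_(t < k) disc_reward d (mix b r k l) t +
    gamma ^+ k * \sum_x state_dist d Tm (mix b r k l) k x * tail x).
  apply: polyfun_add; first apply: polyfun_sum => t.
    apply: polyfun_mul; first exact: polyfun_cst.
    apply: polyfun_sum => s; apply: polyfun_sum => a.
    apply: polyfun_mul; last exact: polyfun_cst.
    by apply: polyfun_mul; [exact: polyfun_state_dist_mix | exact: polyfun_mix].
  apply: polyfun_mul; first exact: polyfun_cst.
  apply: polyfun_sum => x; apply: polyfun_mul; last exact: polyfun_cst.
  exact: polyfun_state_dist_mix.
exists Q => l hl; rewrite -hQ (value_split k hd (mix_policy k hb hr hl)) mix_shift.
by rewrite value_linear // => t; exact: hb.
Qed.

Lemma value_mix_close d b r e : is_dist d -> is_policy b -> is_policy r -> 0 < e ->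
  exists k, `|value d Rw gamma Tm (mix b r k 1) - value d Rw gamma Tm r| < e.
Proof.
move=> hd hb hr e0.
set C := value_bound + value_bound.
have C1_gt0 : 0 < 1 + C by rewrite ltr_wpDr ?addr_ge0 ?value_bound_ge0.
have [k gk] : exists k, gamma ^+ k * C < e.
  have := cvgr0_norm_lt _ (cvg_expr gamma_norm_lt1) _ (divr_gt0 e0 C1_gt0).
  case=> N _ /(_ N (leqnn N)) /=; rewrite ger0_norm ?exprn_ge0 // => gN.
  exists N; apply: (@le_lt_trans _ _ (gamma ^+ N * (1 + C))).
    by rewrite ler_wpM2l ?exprn_ge0 ?lerDr.
  by rewrite -ltr_pdivlMr.
exists k; apply: le_lt_trans gk.
apply: value_agree_bound => // [|t ltk]; last exact: mix1.
by apply: mix_policy; rewrite ?ler01 ?lexx.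
Qed.

End Value.

Lemma not_exploitable_mono (R : realType) (S A : finType)
    (J1 J2 : (nat -> S -> A -> R) -> R) :
  ~ exploitable_on_NS J1 J2 -> forall pi pi', is_policy pi -> is_policy pi' ->
  J1 pi' < J1 pi -> J2 pi' <= J2 pi.
Proof.
move=> nexp pi pi' hpi hpi' lt1; rewrite leNgt; apply/negP => lt2.
by apply: nexp; exists pi, pi'.
Qed.

Lemma exploitable_on_NS_sym (R : realType) (S A : finType)
    (J1 J2 : (nat -> S -> A -> R) -> R) :
  exploitable_on_NS J1 J2 -> exploitable_on_NS J2 J1.
Proof. by case=> pi [pi' [hpi [hpi' [lt1 lt2]]]]; exists pi', pi. Qed.

Lemma ltr_dist_same_side (R : realDomainType) (x y c : R) :
  `|x - y| < `|y - c| -> (c < y -> c < x) /\ (y < c -> x < c).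
Proof.
rewrite ltr_norml => /andP[lo hi]; split=> lt.
  by rewrite gtr0_norm ?subr_gt0 // in lo hi; lra.
by rewrite ltr0_norm ?subr_lt0 // in lo hi; lra.
Qed.

Section Tie.
Variables (R : realType) (S A : finType) (d0 : S -> R) (Rw : S -> A -> R)
  (gamma : R) (Tm1 Tm2 : S -> A -> S -> R).
Hypotheses (gamma_ge0 : 0 <= gamma) (gamma_lt1 : gamma < 1) (hd0 : is_dist d0)
  (hT1 : is_transition Tm1) (hT2 : is_transition Tm2).

Let F := value d0 Rw gamma Tm1.
Let G := value d0 Rw gamma Tm2.

Hypothesis mono : forall pi pi', is_policy pi -> is_policy pi' ->
  F pi' < F pi -> G pi' <= G pi.

Lemma tie_forces_trivial p q r : is_policy p -> is_policy q -> is_policy r ->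
  F p = F q -> G p < G q -> F r = F p.
Proof.
move=> hp hq hr Fpq Gpq; have [//|Frp] := eqVneq (F r) (F p); exfalso.
have level pi : is_policy pi -> G p < G pi < G q -> F pi = F p.
  move=> hpi /andP[Gp Gq]; have [lt|gt|//] := ltrgtP (F pi) (F p).
    by move: (mono hp hpi lt); rewrite leNgt Gp.
  by move: gt; rewrite Fpq => /(mono hpi hq); rewrite leNgt Gq.
(* Starting from p when F r > F p, and from q otherwise, makes the values of G
   at the two ends of the path straddle the interval (G p, G q). *)
pose s0 := if F p < F r then p else q.
have hs0 : is_policy s0 by rewrite /s0; case: ifP.
have e0 : 0 < `|F r - F p| by rewrite normr_gt0 subr_eq0.
have [k close] := value_mix_close Rw gamma_ge0 gamma_lt1 hT1 hd0 hs0 hr e0.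
pose m := mix s0 r k.
have hm l : 0 <= l <= 1 -> is_policy (m l) by exact: mix_policy.
have h01 : 0 <= (1 : R) <= 1 by rewrite ler01 lexx.
have h00 : 0 <= (0 : R) <= 1 by rewrite lexx ler01.
have [PF hPF] : exists PF : {poly R}, forall l, 0 <= l <= 1 -> F (m l) = PF.[l].
  exact: value_mix_poly.
have [PG hPG] : exists PG : {poly R}, forall l, 0 <= l <= 1 -> G (m l) = PG.[l].
  exact: value_mix_poly.
have [above below] : (F p < F r -> F p < F (m 1)) /\ (F r < F p -> F (m 1) < F p).
  exact: ltr_dist_same_side close.
have PG0 : PG.[0] = G s0 by rewrite -(hPG 0 h00) /m mix0.
have PG1 : PG.[1] = G (m 1) by rewrite -(hPG 1 h01).
suff : PF - (F p)%:P = 0.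
  move=> /(congr1 (horner^~ 1)); rewrite !hornerE -hPF // => /eqP.
  rewrite subr_eq0 => /eqP Fm1.
  by case: ltrgtP Frp => // lt _; [move: (below lt) | move: (above lt)];
    rewrite Fm1 ltxx.
apply: (@poly_level_roots _ _ PG _ _ Gpq) => [l hl /andP[Gpl Glq]|].
  rewrite /root !hornerE -hPF // (level (m l) (hm l hl)) ?subrr //.
  by rewrite hPG // Gpl Glq.
rewrite PG0 PG1 /s0; case: ltrgtP Frp => // ltpr _.
- left; split => //; apply: mono (hm 1 h01) hq _.
  by rewrite -Fpq; exact: above.
- right; split => //; apply: mono hp (hm 1 h01) _.
  exact: below.
Qed.

Lemma value_le_transfer p q : is_policy p -> is_policy q ->
  ~ trivial_on_NS F -> F q <= F p -> G q <= G p.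
Proof.
move=> hp hq nontrivial; rewrite le_eqVlt => /orP[/eqP Fqp|]; last exact: mono.
rewrite leNgt; apply/negP => Gpq; apply: nontrivial => pi pi' hpi hpi'.
by rewrite (tie_forces_trivial hp hq hpi (esym Fqp) Gpq)
  (tie_forces_trivial hp hq hpi' (esym Fqp) Gpq).
Qed.

End Tie.

Theorem mainTheorem1 (R : realType) (S A : finType)
    (d0 : S -> R) (Rw : S -> A -> R) (gamma : R)
    (Tm Tm' : S -> A -> S -> R) :
  (1 < #|A|)%N ->
  0 <= gamma -> gamma < 1 ->
  is_dist d0 ->
  is_transition Tm -> is_transition Tm' ->
  all_reachable d0 Tm -> all_reachable d0 Tm' ->
  ~ trivial_on_NS (value d0 Rw gamma Tm) ->
  ~ trivial_on_NS (value d0 Rw gamma Tm') ->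
  ~ equivalent_on_NS (value d0 Rw gamma Tm) (value d0 Rw gamma Tm') ->
  exploitable_on_NS (value d0 Rw gamma Tm) (value d0 Rw gamma Tm').
Proof.
move=> _ hg0 hg1 hd hT hT' _ _ nontrivial nontrivial' not_equiv.
apply: contrapT => not_expl; apply: not_equiv => p q hp hq.
have mono := not_exploitable_mono not_expl.
have mono' := not_exploitable_mono (fun e => not_expl (exploitable_on_NS_sym e)).
split; exact: value_le_transfer.
Qed.
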